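(* Let $N\ge2$ and let $H\in M_{(N-1)\times N}(\mathbb T)$ be partial Hadamard. For $j=1,\ldots,N$ let $H^{(j)}\in M_{N-1}(\mathbb C)$ be obtained from $H$ by removing its $j$-th column. The following are equivalent: (1) $H$ can be completed (by adding an $N$-th row) to an $N\times N$ complex Hadamard matrix; (2) $|\det H^{(j)}|$ is independent of $j$; (3) $|\det H^{(j)}|=N^{N/2-1}$ for every $j$. If so, a completion is obtained by setting $H_{Nj}=(-1)^jN^{1-N/2}\,\overline{\det H^{(j)}}$.
   Context: $\mathbb T$ is the unit circle. A partial Hadamard matrix is a matrix with entries in $\mathbb T$ whose rows are pairwise orthogonal; an $N\times N$ complex Hadamard matrix is a partial Hadamard matrix in $M_N(\mathbb T)$. *)

From HB Require Import structures.
From mathcomp Require Import all_boot all_order all_algebra.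
From mathcomp Require Import reals.
From mathcomp Require Import complex.
Set Implicit Arguments. Unset Strict Implicit. Unset Printing Implicit Defensive.
Import Order.TTheory GRing.Theory Num.Theory.
Local Open Scope ring_scope.

Definition in_T (C : numClosedFieldType) (z : C) : Prop := `|z| = 1.

Definition partial_hadamard (C : numClosedFieldType) (m n : nat)
  (M : 'M[C]_(m, n)) : Prop :=
  (forall i j, in_T (M i j)) /\
  (forall i i', i != i' -> \sum_k M i k * (M i' k)^* = 0).

From HB Require Import structures.
From mathcomp Require Import all_boot all_order all_algebra.
From mathcomp Require Import reals.
From mathcomp Require Import complex.
Set Implicit Arguments. Unset Strict Implicit. Unset Printing Implicit Defensive.
Import Order.TTheory GRing.Theory Num.Theory.
Local Open Scope ring_scope.

(* Write N = n + 1 and let w_j = (-1)^j det H^(j) be the signed maximal minors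
   of H. Expanding along the first row, det [x; H] = sum_j x_j w_j; hence
   H w^T = 0, and for x orthogonal to the rows of H the Gram matrix of [x; H]
   is diag(|x|^2, N, ..., N), so |det [x; H]|^2 = |x|^2 N^n.  Taking x = conj w
   gives sum_j |w_j|^2 = N^n.  So if all |w_j| equal c then c^2 = N^(n-1), and
   the row -(conj w)/c is unimodular and orthogonal to H: it completes H.
   Conversely, for a complex Hadamard completion K of H we have
   adj K = det K K^* / N, whence |w_j| = |det K| / N for every j. *)

Section PartialHadamard.
Variable C : numClosedFieldType.
Local Open Scope sesquilinear_scope.

Lemma trmxC_mul m n p (A : 'M[C]_(m, n)) (B : 'M_(n, p)) :
  (A *m B)^t* = B^t* *m A^t*.
Proof. by rewrite trmx_mul map_mxM. Qed.

Lemma trmxC_eq0 m n (A : 'M[C]_(m, n)) : (A^t* == 0) = (A == 0).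
Proof. by rewrite map_mx_eq0 trmx_eq0. Qed.

Lemma trmxC_conj m n (A : 'M[C]_(m, n)) : (map_mx Num.conj A)^t* = A^T.
Proof. by apply/matrixP=> i j; rewrite !mxE conjCK. Qed.

Lemma mul_trmxC_eq0_sym m n p (A : 'M[C]_(m, n)) (B : 'M_(p, n)) :
  A *m B^t* = 0 -> B *m A^t* = 0.
Proof. by move=> hAB; apply/eqP; rewrite -trmxC_eq0 trmxC_mul trmxCK hAB. Qed.

Lemma det_trmxC n (A : 'M[C]_n) : \det (A^t*) = (\det A)^*.
Proof. by rewrite det_map_mx det_tr. Qed.

Lemma mul_trmxCE m n p (A : 'M[C]_(m, n)) (B : 'M_(p, n)) i k :
  (A *m B^t*) i k = \sum_j A i j * (B k j)^*.
Proof. by rewrite mxE; apply: eq_bigr => j _; rewrite !mxE. Qed.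

Lemma partial_hadamard_col_mx m1 m2 n (A : 'M[C]_(m1, n)) (B : 'M_(m2, n)) :
  partial_hadamard (col_mx A B) <->
  [/\ partial_hadamard A, partial_hadamard B & A *m B^t* = 0].
Proof.
split.
- case=> hT hO; split.
  + split=> [i j|i i' ne]; first by have := hT (lshift m2 i) j; rewrite col_mxEu.
    have := hO (lshift m2 i) (lshift m2 i').
    rewrite (inj_eq (@lshift_inj _ _)) => /(_ ne).
    by under eq_bigr do rewrite !col_mxEu.
  + split=> [i j|i i' ne]; first by have := hT (rshift m1 i) j; rewrite col_mxEd.
    have := hO (rshift m1 i) (rshift m1 i').
    rewrite (inj_eq (@rshift_inj _ _)) => /(_ ne).
    by under eq_bigr do rewrite !col_mxEd.
  + apply/matrixP=> i i'; rewrite mul_trmxCE mxE.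
    have := hO (lshift m2 i) (rshift m1 i'); rewrite eq_lrshift => /(_ isT).
    by under eq_bigr do rewrite col_mxEu col_mxEd.
- case=> [[hAT hAO] [hBT hBO] hAB].
  have hBA := mul_trmxC_eq0_sym hAB.
  split=> [i j|i i'].
    by rewrite -(splitK i); case: (split i) => a /=; rewrite ?col_mxEu ?col_mxEd.
  rewrite -(splitK i) -(splitK i').
  case: (split i) => a; case: (split i') => b /= ne.
  + under eq_bigr do rewrite !col_mxEu.
    by apply: hAO; apply: contraNneq ne => ->.
  + under eq_bigr do rewrite col_mxEu col_mxEd.
    by rewrite -mul_trmxCE hAB mxE.
  + under eq_bigr do rewrite col_mxEu col_mxEd.
    by rewrite -mul_trmxCE hBA mxE.
  + under eq_bigr do rewrite !col_mxEd.
    by apply: hBO; apply: contraNneq ne => ->.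
Qed.

Lemma partial_hadamard_col_mxC m1 m2 n (A : 'M[C]_(m1, n)) (B : 'M_(m2, n)) :
  partial_hadamard (col_mx A B) -> partial_hadamard (col_mx B A).
Proof.
case/partial_hadamard_col_mx=> hA hB hAB; apply/partial_hadamard_col_mx.
by split=> //; apply: mul_trmxC_eq0_sym.
Qed.

Lemma partial_hadamard_gram m n (M : 'M[C]_(m, n)) :
  partial_hadamard M -> M *m M^t* = n%:R%:M.
Proof.
case=> hT hO; apply/matrixP=> i i'; rewrite mul_trmxCE mxE.
have [<-|ne] := eqVneq i i'; last by rewrite hO.
under eq_bigr do rewrite -normCK (hT i _) expr1n.
by rewrite sumr_const card_ord.
Qed.

Variable n : nat.
Implicit Types (H : 'M[C]_(n, n.+1)) (x : 'rV[C]_n.+1).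

Definition signed_minors H : 'rV[C]_n.+1 :=
  \row_j ((-1) ^+ j * \det (col' j H)).

Lemma col_mx_row0E x H j : (col_mx x H : 'M_n.+1) 0 j = x 0 j.
Proof.
have -> : (0 : 'I_n.+1) = lshift n (0 : 'I_1) by apply: val_inj.
exact: col_mxEu.
Qed.

Lemma col_mx_liftE x H i j : (col_mx x H : 'M_n.+1) (lift 0 i) j = H i j.
Proof.
have -> : lift (0 : 'I_n.+1) i = rshift 1 i by apply: val_inj.
exact: col_mxEd.
Qed.

Lemma cofactor_col_mx x H j :
  cofactor (col_mx x H : 'M_n.+1) 0 j = signed_minors H 0 j.
Proof.
rewrite /cofactor mxE add0n; congr (_ * \det _).
apply/matrixP=> a b; rewrite [RHS]mxE mxE [LHS]mxE; exact: col_mx_liftE.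
Qed.

Lemma det_col_mx x H :
  \det (col_mx x H : 'M_n.+1) = (x *m (signed_minors H)^T) 0 0.
Proof.
rewrite (expand_det_row _ 0) mxE; apply: eq_bigr => j _.
by rewrite col_mx_row0E cofactor_col_mx !mxE.
Qed.

(* Entry [i] is the determinant of [H] with its own row [i] put on top. *)
Lemma mul_signed_minors H : H *m (signed_minors H)^T = 0.
Proof.
apply/matrixP=> i k; rewrite ord1 [RHS]mxE.
rewrite -(@determinant_alternate _ _ (col_mx (row i H) H) 0 (lift 0 i)).
- by rewrite det_col_mx !mxE; apply: eq_bigr => j _; rewrite !mxE.
- exact: neq_lift.
- by move=> j; rewrite col_mx_row0E col_mx_liftE mxE.
Qed.

Lemma normCK_det_col_mx x H : partial_hadamard H -> H *m x^t* = 0 ->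
  `|\det (col_mx x H : 'M_n.+1)| ^+ 2 = (x *m x^t*) 0 0 * n.+1%:R ^+ n.
Proof.
move=> hH hx.
have hx' := mul_trmxC_eq0_sym hx.
rewrite normCK -det_trmxC -det_mulmx.
have -> : col_mx x H *m (col_mx x H)^t* =
    block_mx (x *m x^t*) (x *m H^t*) (H *m x^t*) (H *m H^t*) :> 'M_n.+1.
  by rewrite tr_col_mx map_row_mx; exact: (@mul_col_row C 1 n n.+1 1 n).
rewrite hx hx' (partial_hadamard_gram hH).
have := det_ublock (x *m x^t*) 0 (n.+1%:R%:M : 'M[C]_n).
by rewrite det_mx11 det_scalar => <-.
Qed.

Lemma exists_orthogonal_row H : exists2 x : 'rV[C]_n.+1, H *m x^t* = 0 & x != 0.
Proof.
have : kermx H^T != 0.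
  by rewrite -mxrank_eq0 mxrank_ker mxrank_tr subn_eq0 -ltnNge ltnS rank_leq_row.
case/rowV0Pn=> u /sub_kermxP hu u0; exists (map_mx Num.conj u).
  by rewrite trmxC_conj -[H]trmxK -trmx_mul hu trmx0.
by rewrite map_mx_eq0.
Qed.

(* A case of Cauchy--Binet: the squared maximal minors of [H] add up to the
   determinant of its Gram matrix. *)
Lemma sum_normCK_minors H : partial_hadamard H ->
  \sum_j `|\det (col' j H)| ^+ 2 = n.+1%:R ^+ n.
Proof.
move=> hH; set w := signed_minors H; set v := map_mx Num.conj w.
have -> : \sum_j `|\det (col' j H)| ^+ 2 = dotmx w w.
  rewrite dotmxE mul_trmxCE; apply: eq_bigr => j _.
  by rewrite -normCK mxE normrM normrX normrN1 expr1n mul1r.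
have v_trmxC : v^t* = w^T by rewrite trmxC_conj.
have v_dot : (v *m v^t*) 0 0 = dotmx w w.
  by rewrite v_trmxC dotmxE !mxE; apply: eq_bigr => j _; rewrite !mxE mulrC.
have w_neq0 : dotmx w w != 0.
  rewrite dnorm_eq0; apply/eqP=> w0.
  have [x hx x_neq0] := exists_orthogonal_row H.
  have := normCK_det_col_mx hH hx; rewrite det_col_mx -/w w0 trmx0 mulmx0.
  rewrite mxE normr0 expr0n /= => /esym/eqP.
  by rewrite mulf_eq0 expf_eq0 pnatr_eq0 andbF orbF -dotmxE dnorm_eq0 (negbTE x_neq0).
have hv : H *m v^t* = 0 by rewrite v_trmxC mul_signed_minors.
have := normCK_det_col_mx hH hv; rewrite det_col_mx -v_trmxC v_dot.
by rewrite ger0_norm ?dnorm_ge0 // expr2 => /(mulfI w_neq0).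
Qed.

Lemma minors_norm_const H (c : C) : (0 < n)%N -> partial_hadamard H ->
  (forall j, `|\det (col' j H)| = c) -> c = sqrtC n.+1%:R ^+ n.-1.
Proof.
move=> n_gt0 hH hc.
have c_ge0 : 0 <= c by rewrite -(hc 0) normr_ge0.
have c2 : c ^+ 2 = n.+1%:R ^+ n.-1.
  apply: (@mulfI _ n.+1%:R); first by rewrite pnatr_eq0.
  rewrite -exprS prednK // -(sum_normCK_minors hH); under eq_bigr do rewrite hc.
  by rewrite sumr_const card_ord mulr_natl.
rewrite -(sqrCK c_ge0) c2 -{1}[n.+1%:R]sqrtCK exprAC sqrCK //.
by rewrite exprn_ge0 // sqrtC_ge0 ler0n.
Qed.

(* [adj K = det K * K^* / N], since [K K^* = N]. *)
Lemma completed_minors_norm x H : partial_hadamard (col_mx x H : 'M_n.+1) ->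
  forall j, `|\det (col' j H)| * n.+1%:R = `|\det (col_mx x H : 'M_n.+1)|.
Proof.
move=> hK j; set K := (col_mx x H : 'M_n.+1).
have e : n.+1%:R *: \adj K = \det K *: K^t*.
  by rewrite -mul_mx_scalar -(partial_hadamard_gram hK) mulmxA mul_adj_mx
    mul_scalar_mx.
move: (congr1 (fun M : 'M_n.+1 => `|M j 0|) e).
rewrite [(_ *: \adj K) j 0]mxE [(_ *: K^t*) j 0]mxE [\adj K j 0]mxE.
rewrite cofactor_col_mx.
rewrite [K^t* j 0]mxE [K^T j 0]mxE !normrM normr_nat norm_conjC (hK.1 0 j).
by rewrite mxE normrM normrX normrN1 expr1n mul1r mulr1 mulrC.
Qed.

Lemma completion_partial_hadamard H (a : C) : partial_hadamard H -> 0 < a ->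
  (forall j, `|\det (col' j H)| = a) ->
  partial_hadamard (col_mx H
    (\row_(j < n.+1) ((-1) ^+ j.+1 * a^-1 * (\det (col' j H))^*))).
Proof.
move=> hH a_gt0 ha; apply/partial_hadamard_col_mx; split=> //.
  split=> [i j|i i']; last by rewrite !ord1 eqxx.
  rewrite /in_T mxE !normrM normrX normrN1 expr1n mul1r norm_conjC ha.
  by rewrite normfV gtr0_norm // (mulVf (lt0r_neq0 a_gt0)).
set r := \row_j _.
have -> : r^t* = - a^-1 *: (signed_minors H)^T.
  apply/matrixP=> j k; rewrite !mxE !rmorphM rmorphXn rmorphN1 /= conjCK.
  by rewrite geC0_conj ?invr_ge0 ?ltW // exprS mulN1r !mulNr mulrCA mulrA.
by rewrite -scalemxAr mul_signed_minors scaler0.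
Qed.

End PartialHadamard.

Local Open Scope complex_scope.

Theorem proposition3p1 (R : realType) (N : nat) (hN : (2 <= N)%N)
  (H : 'M[R[i]]_(N.-1, N)) (hH : partial_hadamard H) :
  let P1 := exists r : 'rV[R[i]]_N, partial_hadamard (col_mx H r) in
  let P2 := exists c : R[i], forall j : 'I_N, `|\det (col' j H)| = c in
  let P3 := forall j : 'I_N,
      `|\det (col' j H)| = sqrtC (N%:R : R[i]) ^+ (N - 2) in
  let r0 := \row_(j < N) ((-1) ^+ j.+1 * sqrtC (N%:R : R[i]) ^- (N - 2)
                            * (\det (col' j H))^*) in
  [/\ P1 <-> P2, P2 <-> P3 & P1 -> partial_hadamard (col_mx H r0)].
Proof.
case: N hN H hH => [|n] // n_gt0 H hH P1 P2 P3 r0.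
have P2_P3 : P2 -> P3.
  case=> c hc j; rewrite hc subSS subn1.
  exact: (minors_norm_const n_gt0 hH hc).
have P3_r0 : P3 -> partial_hadamard (col_mx H r0).
  move=> h3; apply: completion_partial_hadamard => //.
  by rewrite exprn_gt0 // sqrtC_gt0 ltr0n.
have P1_P2 : P1 -> P2.
  case=> r /partial_hadamard_col_mxC hr.
  exists (`|\det (col_mx r H : 'M_n.+1)| / n.+1%:R) => j.
  by rewrite -(completed_minors_norm hr j) mulfK // pnatr_eq0.
have P3_P2 : P3 -> P2 by exists (sqrtC (n.+1%:R : R[i]) ^+ (n.+1 - 2)).
split; [split | split | ] => //.
- by move/P2_P3/P3_r0; exists r0.
- by move/P1_P2/P2_P3/P3_r0.
Qed.
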